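(* Let $X$ be a $d$-dimensional clique complex, $3d_1\le d-2$, $X$ $d_1$-well-connected, and $\nu:\widetilde{F^{d_1}X}\to F^{d_1}X$ an $\ell$-covering map. For a face $r\in X$ let $Z_r=\nu^{-1}(F^{d_1}X_r)\subseteq\widetilde{F^{d_1}X}$ (the induced subcomplex on the preimage of the vertices of $F^{d_1}(X_r)$). Then: (1) for every nonempty $r\in X$ of dimension $\le d_1$, $Z_r$ has exactly $\ell$ connected components $Z_r^1,\dots,Z_r^\ell$, and $\nu$ restricted to each $Z_r^i$ is an isomorphism onto $F^{d_1}X_r$; (2) for all nonempty $r\subseteq s$ of dimension $\le d_1$ there is a permutation $\pi_{r,s}$ of $[\ell]$ such that $Z_s^i\subseteq Z_r^j$ if and only if $\pi_{r,s}(i)=j$.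
   Context: $X(i)$ = faces with $i+1$ vertices; link $X_r=\{t\setminus r:r\subseteq t\in X\}$. Clique complex: every set of pairwise adjacent vertices is a face. Faces complex $F^{d_1}X$: vertex set $X(d_1)$, faces the sets of pairwise disjoint $d_1$-faces whose union is in $X$; $F^{d_1}X_r:=F^{d_1}(X_r)$, viewed as a subcomplex of $F^{d_1}X$ (a vertex $s$ of it corresponds to $s\in X(d_1)$ with $s\cap r=\emptyset$, $s\cup r\in X$). Covering map: a surjective simplicial homomorphism on vertices that restricts to an isomorphism between the link of each vertex and the link of its image; $\ell$-cover if each vertex has $\ell$ preimages. Simply connected: connected, and every $\ell$-cover is a disjoint union of $\ell$ components each mapped isomorphically. $d_1$-well-connected: for every face $r$ of dimension $\le d_1$ (including $\emptyset$) $F^{d_1}(X_r)$ is connected, and for every vertex $r$ it is simply connected. *)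

From mathcomp Require Import all_boot fingroup perm.
Set Implicit Arguments. Unset Strict Implicit. Unset Printing Implicit Defensive.

Section Complexes.
Variable T : finType.
Implicit Types (K : {set {set T}}) (t r : {set T}).

Definition simplicial_complex K := forall t s : {set T}, t \in K -> s \subset t -> s \in K.

Definition vertices K : {set T} := [set x | [set x] \in K].

Definition dimension K (d : nat) :=
  (forall t, t \in K -> #|t| <= d.+1) /\ exists2 t, t \in K & #|t| = d.+1.

Definition clique_complex K :=
  forall t, t \subset vertices K ->
    (forall x y, x \in t -> y \in t -> x != y -> [set x; y] \in K) -> t \in K.

Definition link K r : {set {set T}} := [set t :\: r | t in [set t in K | r \subset t]].

Definition induced K (S : {set T}) : {set {set T}} := [set t in K | t \subset S].

Definition adj K : rel T := fun x y => (x != y) && ([set x; y] \in K).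
Definition comp K x : {set T} := [set y in vertices K | connect (adj K) x y].
Definition components K : {set {set T}} := [set comp K x | x in vertices K].
Definition connected K :=
  (vertices K != set0) /\
  forall x y, x \in vertices K -> y \in vertices K -> connect (adj K) x y.

(* faces complex F^{d1} K: vertices are the d1-faces of K; faces are sets of
   pairwise disjoint d1-faces whose union is a face of K *)
Definition faces_complex (d1 : nat) K : {set {set {set T}}} :=
  [set S : {set {set T}} |
     [forall s in S, (s \in K) && (#|s| == d1.+1)] &&
     [forall s in S, forall s' in S, (s != s') ==> [disjoint s & s']] &&
     (\bigcup_(s in S) s \in K)].
End Complexes.

Section Maps.
Variables (W T : finType).
Implicit Types (Y : {set {set W}}) (K : {set {set T}}) (f : W -> T).

Definition iso_on Y K f :=
  [/\ {in vertices Y &, injective f},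
      f @: vertices Y = vertices K &
      forall t : {set W}, t \subset vertices Y -> (t \in Y) = (f @: t \in K)].

Definition covering_map Y K f :=
  [/\ forall t : {set W}, t \in Y -> f @: t \in K,
      f @: vertices Y = vertices K &
      forall w, w \in vertices Y -> iso_on (link Y [set w]) (link K [set f w]) f].

Definition lcover Y K f (l : nat) :=
  covering_map Y K f /\
  forall v, v \in vertices K -> #|[set w in vertices Y | f w == v]| = l.
End Maps.

Definition simply_connected (T : finType) (K : {set {set T}}) :=
  connected K /\
  forall (W : finType) (Y : {set {set W}}) (f : W -> T) (l : nat),
    simplicial_complex Y -> lcover Y K f l ->
    #|components Y| = l /\
    forall C, C \in components Y -> iso_on (induced Y C) K f.

Definition well_connected (T : finType) (d1 : nat) (X : {set {set T}}) :=
  (forall r, r \in X -> #|r| <= d1.+1 -> connected (faces_complex d1 (link X r))) /\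
  (forall v, [set v] \in X -> simply_connected (faces_complex d1 (link X [set v]))).

(* For a vertex v of X the complex F_v is simply connected, so the
   preimage Z_v of F_v (an l-cover of F_v) is a trivial cover: l components,
   each mapped isomorphically onto F_v.  For a face r ∋ v, F_r is a connected
   subcomplex of F_v, and it is full because X is a clique complex.  Pulling
   a trivial cover back along a connected full subcomplex keeps it trivial:
   every sheet C of Z_v meets the preimage in a single component C ∩ ν⁻¹(F_r)
   (path lifting inside C), and these are all the components.  Hence Z_r has
   exactly l components, each isomorphic to F_r; we index them by enumerating
   the finite set of components.  For r ⊆ s, Z_s ⊆ Z_r, so each sheet of Z_s
   lies in exactly one sheet of Z_r; two sheets of Z_s cannot lie in the same
   sheet of Z_r, since both contain a preimage of a common vertex of F_s and
   ν is injective on sheets of Z_r.  An injective functional relation on a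
   finite set is the graph of a permutation, which gives π_{r,s}.
   The dimension bound 3 d1 <= d - 2 only serves (in the paper) to obtain
   well-connectedness, which is assumed here. *)

From Pilot Require Import Defs.
From mathcomp Require Import all_boot fingroup perm.
Set Implicit Arguments. Unset Strict Implicit. Unset Printing Implicit Defensive.

Section Complexes.
Variable T : finType.
Implicit Types (K : {set {set T}}) (S t r s : {set T}).

Lemma link_mem K r t : (t \in link K r) = [disjoint t & r] && (t :|: r \in K).
Proof.
apply/imsetP/andP => [[u] | [dj tr]].
  rewrite inE => /andP [uK ru] ->; split.
    by rewrite -setI_eq0 setDE -setIA (setIC _ r) setICr setI0.
  suff -> : u :\: r :|: r = u by [].
  by rewrite setUC -{2}(setID u r) (setIidPr ru) setUC.
exists (t :|: r); first by rewrite inE tr subsetUr.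
by rewrite setDUl setDv setU0; apply/esym/setDidPl.
Qed.

Lemma link_sub K r : simplicial_complex K -> {subset link K r <= K}.
Proof. by move=> HK t; rewrite link_mem => /andP [_ /HK]; apply; rewrite subsetUl. Qed.

Lemma link_mono K r s : simplicial_complex K -> r \subset s ->
  {subset link K s <= link K r}.
Proof.
move=> HK rs t; rewrite !link_mem => /andP [dj tK]; apply/andP; split.
  exact: disjointWr dj.
by apply: (HK _ _ tK); apply: setUS.
Qed.

Lemma link_simplicial K r : simplicial_complex K -> simplicial_complex (link K r).
Proof.
move=> HK t u; rewrite !link_mem => /andP [dj tK] ut; apply/andP; split.
  exact: disjointWl dj.
by apply: (HK _ _ tK); apply: setSU.
Qed.

Lemma vertices_link1 K v x :
  (x \in vertices (link K [set v])) = (x != v) && ([set x; v] \in K).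
Proof. by rewrite inE link_mem disjoints1 inE. Qed.

Lemma vertices_induced K S x :
  (x \in vertices (induced K S)) = (x \in vertices K) && (x \in S).
Proof. by rewrite !inE sub1set. Qed.

Lemma induced_sub K S : {subset induced K S <= K}.
Proof. by move=> t; rewrite inE => /andP []. Qed.

Lemma induced_simplicial K S : simplicial_complex K -> simplicial_complex (induced K S).
Proof.
move=> HK t u; rewrite !inE => /andP [tK tS] ut.
by rewrite (HK _ _ tK ut) (subset_trans ut tS).
Qed.

Lemma vertices_sub K K' : {subset K' <= K} -> vertices K' \subset vertices K.
Proof. by move=> KK; apply/subsetP => x; rewrite !inE; apply: KK. Qed.

Lemma vertices_faces_complex d1 K s :
  (s \in vertices (faces_complex d1 K)) = (s \in K) && (#|s| == d1.+1).
Proof.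
rewrite !inE big_set1.
apply/andP/andP => [[/andP [/forall_inP H _] sK] | [sK ss]].
  by split => //; have /andP [] := H s (set11 s).
split => //; apply/andP; split.
  by apply/forall_inP => s'; rewrite inE => /eqP ->; rewrite sK.
apply/forall_inP => s1; rewrite inE => /eqP ->.
by apply/forall_inP => s2; rewrite inE => /eqP ->; rewrite eqxx.
Qed.

Lemma faces_complex_simplicial d1 K :
  simplicial_complex K -> simplicial_complex (faces_complex d1 K).
Proof.
move=> HK S S'; rewrite !inE => /andP [/andP [/forall_inP H1 /forall_inP H2] H3] sub.
apply/andP; split; first (apply/andP; split).
- by apply/forall_inP => s sS; apply: H1; apply: (subsetP sub).
- apply/forall_inP => s sS; apply/forall_inP => s' s'S.
  by have /forall_inP := H2 s (subsetP sub _ sS); apply; apply: (subsetP sub).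
- apply: (HK _ _ H3); apply/bigcupsP => s sS; exact: (bigcup_max s (subsetP sub _ sS)).
Qed.

Lemma faces_complex_mono d1 K K' :
  {subset K <= K'} -> {subset faces_complex d1 K <= faces_complex d1 K'}.
Proof.
move=> KK S; rewrite !inE => /andP [/andP [/forall_inP H1 ->] H3].
rewrite (KK _ H3) !andbT; apply/forall_inP => s sS.
by have /andP [sK ->] := H1 s sS; rewrite (KK _ sK).
Qed.

End Complexes.

(* K' is a full subcomplex of K: a face of K spanned by vertices of K' is a
   face of K'.  Fullness is what lets isomorphisms and covers restrict. *)
Definition full_subcomplex (T : finType) (K' K : {set {set T}}) :=
  {subset K' <= K} /\ forall S, S \in K -> S \subset vertices K' -> S \in K'.

Lemma full_subcomplex_restrict (T : finType) (K' K'' K : {set {set T}}) :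
  full_subcomplex K' K -> {subset K' <= K''} -> {subset K'' <= K} ->
  full_subcomplex K' K''.
Proof. by move=> [_ HK'] K'K'' K''K; split => // S /K''K; apply: HK'. Qed.

(* In a clique complex the faces complex of a link is a full subcomplex of
   the faces complex: pairwise adjacency of the vertices of ∪S ∪ r is checked
   on faces of X_r or on r itself. *)
Lemma faces_complex_link_full (T : finType) (X : {set {set T}}) d1 r :
  simplicial_complex X -> clique_complex X -> r \in X ->
  full_subcomplex (faces_complex d1 (link X r)) (faces_complex d1 X).
Proof.
move=> HX Hcl rX; split; first by apply: faces_complex_mono; apply: link_sub.
move=> S; rewrite !inE => /andP [/andP [_ ->] SX] sub.
have Hv s : s \in S -> [&& s \in link X r & #|s| == d1.+1].
  by move=> sS; rewrite -vertices_faces_complex (subsetP sub).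
rewrite andbT; apply/andP; split.
  by apply/forall_inP => s /Hv.
have HvX s : s \in S -> [disjoint s & r] && (s :|: r \in X).
  by move=> /Hv /andP []; rewrite link_mem.
rewrite link_mem; apply/andP; split.
  rewrite -setI_eq0; apply/eqP/setP => x; rewrite !inE; apply/negbTE.
  apply/andP => [[/bigcupP [s sS xs] xr]].
  have /andP [dj _] := HvX s sS.
  by move: dj; rewrite -setI_eq0 => /eqP/setP/(_ x); rewrite !inE xs xr.
have pairX x y t : t \in X -> x \in t -> y \in t -> [set x; y] \in X.
  move=> tX xt yt; apply: (HX _ _ tX).
  by apply/subsetP => z; rewrite !inE => /orP [] /eqP ->.
apply: Hcl => [|x y].
  apply/subsetP => x; rewrite !inE => /orP [xU | xr].
    by apply: (HX _ _ SX); rewrite sub1set.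
  by apply: (HX _ _ rX); rewrite sub1set.
rewrite !inE => /orP [/bigcupP [s sS xs] | xr] /orP [/bigcupP [s' s'S ys] | yr] _.
- by apply: (pairX _ _ _ SX); apply/bigcupP; [exists s | exists s'].
- by have /andP [_ sr] := HvX s sS; apply: (pairX _ _ _ sr); rewrite inE ?xs ?yr ?orbT.
- by have /andP [_ sr] := HvX s' s'S; apply: (pairX _ _ _ sr); rewrite inE ?ys ?xr ?orbT.
- exact: pairX _ _ _ rX xr yr.
Qed.

Section Preimage.
Variables (W T : finType).
Implicit Types (Y A : {set {set W}}) (K L M : {set {set T}}) (f : W -> T).

Definition preimage_complex Y f L := induced Y [set w | f w \in vertices L].

Lemma preimage_mono Y f L M :
  {subset L <= M} -> {subset preimage_complex Y f L <= preimage_complex Y f M}.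
Proof.
move=> LM t; rewrite /preimage_complex !inE => /andP [-> /subsetP tP].
by apply/subsetP => x /tP; rewrite !inE => /LM.
Qed.

Lemma preimage_preimage Y f L M : {subset L <= M} ->
  preimage_complex (preimage_complex Y f M) f L = preimage_complex Y f L.
Proof.
move=> LM; apply/setP => t; rewrite /preimage_complex !inE andbAC.
apply: andb_idr => /andP [_ /subsetP tP]; apply/subsetP => x /tP.
by rewrite !inE => /LM.
Qed.

Lemma imset_preim f (A : {set W}) (B : {set T}) :
  f @: (A :&: [set x | f x \in B]) = f @: A :&: B.
Proof.
apply/setP => y; apply/imsetP/setIP => [[x] | [/imsetP [x xA ->] yB]].
  by rewrite !inE => /andP [xA xB] ->; split => //; apply: imset_f.
by exists x => //; rewrite !inE xA yB.
Qed.

Lemma imset_sub_vertices f (t : {set W}) L :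
  t \subset [set w | f w \in vertices L] -> f @: t \subset vertices L.
Proof.
by move=> tP; apply/subsetP => y /imsetP [x xt ->]; have := subsetP tP x xt; rewrite inE.
Qed.

Lemma vertices_preimage_set Y f L :
  vertices (preimage_complex Y f L) = vertices Y :&: [set w | f w \in vertices L].
Proof. by apply/setP => x; rewrite vertices_induced in_setI. Qed.

Lemma iso_preimage A K L f : iso_on A K f -> full_subcomplex L K ->
  iso_on (preimage_complex A f L) L f.
Proof.
move=> [Hinj Him Hf] [KK Hfull]; rewrite /iso_on vertices_preimage_set.
split.
- by move=> x y /setIP [xA _] /setIP [yA _]; apply: Hinj.
- by rewrite imset_preim Him; apply/setIidPr; apply: vertices_sub.
- move=> t; rewrite subsetI => /andP [tA tP].
  rewrite inE tP andbT Hf //; apply/idP/idP => [H|]; last exact: KK.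
  by apply: Hfull => //; apply: imset_sub_vertices.
Qed.

Lemma link_full K L (u : {set T}) v : full_subcomplex L K ->
  u \subset vertices L -> v \in vertices L ->
  (u \in link L [set v]) = (u \in link K [set v]).
Proof.
move=> [KK Hfull] uV vV; rewrite !link_mem; congr (_ && _).
apply/idP/idP => [/KK // | H].
by apply: Hfull => //; rewrite subUset uV sub1set.
Qed.

Lemma link_iso_preimage Y K L f w : simplicial_complex L -> full_subcomplex L K ->
  w \in [set w | f w \in vertices L] ->
  iso_on (link Y [set w]) (link K [set f w]) f ->
  iso_on (link (preimage_complex Y f L) [set w]) (link L [set f w]) f.
Proof.
move=> HL fullL wP [Hinj Himw Hfw]; have [KK Hfull] := fullL.
set P := [set w | f w \in vertices L].
have HLV : vertices (link (preimage_complex Y f L) [set w]) =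
           vertices (link Y [set w]) :&: P.
  apply/setP => x; rewrite in_setI !vertices_link1.
  by rewrite [[set x; w] \in _]inE subUset !sub1set wP andbT andbA.
have fwV : f w \in vertices L by move: wP; rewrite inE.
have HLK : vertices (link L [set f w]) =
           vertices (link K [set f w]) :&: vertices L.
  apply/setP => x; rewrite in_setI !vertices_link1.
  apply/andP/andP => [[xn xK] | [/andP [xn xK] xV]].
    split; first by rewrite xn KK.
    by rewrite inE; apply: (HL _ _ xK); rewrite sub1set !inE eqxx.
  by split => //; apply: Hfull => //; rewrite subUset !sub1set xV.
split.
- by move=> x y; rewrite HLV => /setIP [x1 _] /setIP [y1 _]; apply: Hinj.
- by rewrite HLV imset_preim Himw -HLK.
- move=> t; rewrite HLV subsetI => /andP [tL tP].
  rewrite (link_full fullL) //; last by apply: imset_sub_vertices.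
  rewrite -Hfw // !link_mem; congr (_ && _).
  by rewrite inE subUset tP sub1set wP !andbT.
Qed.

Lemma lcover_preimage Y K L f l : lcover Y K f l -> simplicial_complex L ->
  full_subcomplex L K -> lcover (preimage_complex Y f L) L f l.
Proof.
move=> [[Hf Him Hlk] Hcnt] HL fullL; have [KK Hfull] := fullL.
have VL : vertices L = vertices K :&: vertices L.
  by apply/esym/setIidPr; exact: vertices_sub.
split; first split.
- move=> t; rewrite inE => /andP [tY tP].
  by apply: Hfull; [apply: Hf | apply: imset_sub_vertices].
- by rewrite vertices_preimage_set imset_preim Him -VL.
- move=> w; rewrite vertices_preimage_set => /setIP [wY wP].
  exact: link_iso_preimage HL fullL wP (Hlk w wY).
- move=> v vV; rewrite -(Hcnt v); last exact: (subsetP (vertices_sub KK)).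
  apply: eq_card => x; rewrite !inE sub1set.
  case: (f x =P v) => [ex | ]; last by rewrite !andbF.
  by rewrite inE ex vV !andbT.
Qed.

End Preimage.

Section Components.
Variable W : finType.
Implicit Types (A B : {set {set W}}) (C : {set W}).

Lemma adj_sym A : symmetric (adj A).
Proof. by move=> x y; rewrite /adj eq_sym setUC. Qed.

Lemma comp_self A x : x \in vertices A -> x \in Defs.comp A x.
Proof. by move=> xV; rewrite inE xV connect0. Qed.

Lemma comp_eq A x y : y \in Defs.comp A x -> Defs.comp A y = Defs.comp A x.
Proof.
rewrite inE => /andP [yV cxy]; apply/setP => z; rewrite !inE; congr (_ && _).
apply/idP/idP => H; first exact: connect_trans cxy H.
by apply: connect_trans H; rewrite (sym_connect_sym (adj_sym A)).
Qed.

Lemma components_mem A C x : C \in components A -> x \in C -> C = Defs.comp A x.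
Proof. by move=> /imsetP [x0 _ ->] xC; rewrite (comp_eq xC). Qed.

Lemma components_disj A C C' x : C \in components A -> C' \in components A ->
  x \in C -> x \in C' -> C = C'.
Proof.
by move=> CA C'A xC xC'; rewrite (components_mem CA xC) (components_mem C'A xC').
Qed.

Lemma components_vertices A C : C \in components A -> C \subset vertices A.
Proof. by move=> /imsetP [x _ ->]; apply/subsetP => y; rewrite inE => /andP []. Qed.

Lemma components_nonempty A C : C \in components A -> exists x, x \in C.
Proof. by move=> /imsetP [x xV ->]; exists x; apply: comp_self. Qed.

Lemma vertices_induced_component A C :
  C \in components A -> vertices (induced A C) = C.
Proof.
move=> /components_vertices /subsetP CV; apply/setP => x.
by rewrite vertices_induced; apply/andb_idl/CV.
Qed.

Lemma connect_mono A B x y :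
  {subset A <= B} -> connect (adj A) x y -> connect (adj B) x y.
Proof.
move=> AB; apply: connect_sub => a b; rewrite /adj => /andP [ab abA].
by apply: connect1; rewrite /adj ab AB.
Qed.

Lemma component_in_component A B C : {subset A <= B} -> C \in components A ->
  exists2 C', C' \in components B & C \subset C'.
Proof.
move=> AB /imsetP [x xA ->].
have xB := subsetP (vertices_sub AB) x xA.
exists (Defs.comp B x); first exact: imset_f.
apply/subsetP => y; rewrite !inE => /andP [/AB yB cxy].
by rewrite yB (connect_mono AB).
Qed.

End Components.

Section TrivialCovers.
Variables (W T : finType).
Implicit Types (Y : {set {set W}}) (K : {set {set T}}) (f : W -> T).

Definition trivial_cover Y K f :=
  forall C, C \in components Y -> iso_on (induced Y C) K f.

Lemma trivial_cover_inj Y K f C : trivial_cover Y K f ->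
  C \in components Y -> {in C &, injective f}.
Proof.
by move=> triv CY; have [] := triv C CY; rewrite vertices_induced_component.
Qed.

Lemma trivial_cover_surj Y K f C u : trivial_cover Y K f ->
  C \in components Y -> u \in vertices K -> exists2 x, x \in C & f x = u.
Proof.
move=> triv CY; have [_ + _] := triv C CY; rewrite vertices_induced_component //.
by move=> <- /imsetP [x xC ->]; exists x.
Qed.

(* Two components that lie in one component of a trivial cover B, and that
   both map onto the same nonempty complex K, are equal: both contain a
   preimage of a fixed vertex of K, and f is injective on components of B. *)
Lemma components_in_sheet_eq Y B K KB f C1 C2 C' :
  vertices K != set0 -> trivial_cover Y K f -> trivial_cover B KB f ->
  C1 \in components Y -> C2 \in components Y -> C' \in components B ->
  C1 \subset C' -> C2 \subset C' -> C1 = C2.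
Proof.
move=> /set0Pn [u uK] trivY trivB C1Y C2Y C'B /subsetP C1C' /subsetP C2C'.
have [a aC1 fa] := trivial_cover_surj trivY C1Y uK.
have [b bC2 fb] := trivial_cover_surj trivY C2Y uK.
have eab : a = b.
  by apply: (trivial_cover_inj trivB C'B); [exact: C1C' | exact: C2C' | rewrite fa fb].
by apply: (components_disj C1Y C2Y aC1); rewrite eab.
Qed.

Lemma path_lift (A : {set {set W}}) K f u z :
  iso_on A K f -> simplicial_complex K -> u \in vertices A ->
  connect (adj K) (f u) z ->
  exists2 y, y \in vertices A & f y = z /\ connect (adj A) u y.
Proof.
move=> [Hinj Him Hf] HK uA /connectP [p Hp ->].
elim: p u uA Hp => [|b p IH] u uA /=; first by move=> _; exists u.
move=> /andP [Hb Hp].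
have bV : b \in vertices K.
  move: Hb; rewrite /adj => /andP [_ HbK]; rewrite inE; apply: (HK _ _ HbK).
  by rewrite sub1set !inE eqxx orbT.
move: bV; rewrite -Him => /imsetP [y yA eb]; subst b.
have [y' y'A [<- cy]] := IH y yA Hp.
exists y' => //; split => //.
apply: connect_trans cy; apply: connect1.
move: Hb; rewrite /adj => /andP [ne HbK].
have -> : u != y by apply: contraNneq ne => ->.
rewrite Hf; first by rewrite imsetU1 imset_set1.
by apply/subsetP => q /set2P [] ->.
Qed.

Section Restriction.
Variables (Z : {set {set W}}) (K K' : {set {set T}}) (f : W -> T).
Hypothesis fullK' : full_subcomplex K' K.
Hypothesis simplK' : simplicial_complex K'.
Hypothesis connK' : connected K'.
Hypothesis trivZ : trivial_cover Z K f.
Let P := [set w | f w \in vertices K'].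
Let Z' := preimage_complex Z f K'.

Lemma sheet_part_iso C : C \in components Z -> iso_on (induced Z' (C :&: P)) K' f.
Proof.
move=> CZ; have -> : induced Z' (C :&: P) = preimage_complex (induced Z C) f K'.
  apply/setP => t; rewrite !inE subsetI.
  by case: (t \in Z); case: (t \subset C); case: (t \subset P).
exact: iso_preimage (trivZ CZ) fullK'.
Qed.

Lemma sheet_part_nonempty C : C \in components Z -> exists x, x \in C :&: P.
Proof.
move=> CZ; have [_ Him _] := sheet_part_iso CZ.
have [/set0Pn [u]] := connK'; rewrite -Him => /imsetP [x + _].
by rewrite vertices_induced => /andP [_ xCP]; exists x.
Qed.

(* Connectedness of K' makes the part of a sheet over K' a single component. *)
Lemma sheet_part_component C x : C \in components Z -> x \in C :&: P ->
  Defs.comp Z' x = C :&: P.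
Proof.
move=> CZ xCP; have /setIP [xC xP] := xCP.
have ZZ' : {subset Z' <= Z} by apply: induced_sub.
have xZ' : x \in vertices Z'.
  by rewrite vertices_induced xP andbT (subsetP (components_vertices CZ)).
have [Hinj Him _] := sheet_part_iso CZ.
have xA : x \in vertices (induced Z' (C :&: P)) by rewrite vertices_induced xZ'.
apply/setP => y; apply/idP/idP.
  rewrite inE => /andP [yZ' cxy]; move: (yZ'); rewrite vertices_induced => /andP [yZ yP].
  rewrite inE yP andbT (components_mem CZ xC) inE yZ.
  exact: connect_mono ZZ' cxy.
move=> yCP; have /setIP [yC yP] := yCP.
have yZ' : y \in vertices Z'.
  by rewrite vertices_induced yP andbT (subsetP (components_vertices CZ)).
have yA : y \in vertices (induced Z' (C :&: P)) by rewrite vertices_induced yZ'.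
have [_ Hc] := connK'.
have fV z : z \in vertices (induced Z' (C :&: P)) -> f z \in vertices K'.
  by move=> zA; rewrite -Him imset_f.
have [y' y'A [fy' cy']] :=
  path_lift (sheet_part_iso CZ) simplK' xA (Hc _ _ (fV x xA) (fV y yA)).
have ey : y' = y := Hinj _ _ y'A yA fy'; subst y'.
by rewrite inE yZ' (connect_mono (@induced_sub _ Z' _) cy').
Qed.

Lemma components_preimage : components Z' = [set C :&: P | C in components Z].
Proof.
apply/setP => D; apply/imsetP/imsetP => [[x xZ' ->] | [C CZ ->]].
  move: (xZ'); rewrite vertices_induced => /andP [xZ xP].
  exists (Defs.comp Z x); first exact: imset_f.
  by apply: sheet_part_component; [exact: imset_f | rewrite inE comp_self].
have [x xCP] := sheet_part_nonempty CZ; exists x.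
  have /setIP [xC xP] := xCP.
  by rewrite vertices_induced xP andbT (subsetP (components_vertices CZ)).
by rewrite (sheet_part_component CZ xCP).
Qed.

Lemma card_components_preimage : #|components Z'| = #|components Z|.
Proof.
rewrite components_preimage card_in_imset // => C1 C2 C1Z C2Z e12.
have [x xC1P] := sheet_part_nonempty C1Z.
have /setIP [xC2 _] : x \in C2 :&: P by rewrite -e12.
by case/setIP: xC1P => xC1 _; apply: (components_disj C1Z C2Z xC1 xC2).
Qed.

Lemma trivial_cover_preimage : trivial_cover Z' K' f.
Proof.
by move=> D; rewrite components_preimage => /imsetP [C CZ ->]; apply: sheet_part_iso.
Qed.

End Restriction.
End TrivialCovers.

Section Enumeration.
Variables (T : finType) (S : {set T}) (x0 : T) (l : nat).
Hypothesis cardS : #|S| = l.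

Lemma size_enum_set : size (enum S) = l.
Proof. by rewrite -cardE. Qed.

Lemma enum_nth_inj : injective (fun i : 'I_l => nth x0 (enum S) i).
Proof.
move=> i j /eqP; rewrite nth_uniq ?size_enum_set ?enum_uniq //.
by move/eqP/val_inj.
Qed.

Lemma enum_nth_image : [set nth x0 (enum S) i | i : 'I_l] = S.
Proof.
apply/setP => x; apply/imsetP/idP => [[i _ ->] | xS].
  by rewrite -mem_enum mem_nth ?size_enum_set.
have il : index x (enum S) < l by rewrite -size_enum_set index_mem mem_enum.
by exists (Ordinal il); rewrite //= nth_index ?mem_enum.
Qed.

End Enumeration.

Lemma perm_of_rel (I : finType) (R : I -> I -> bool) :
  (forall i, exists j, R i j) ->
  (forall i j j', R i j -> R i j' -> j = j') ->
  (forall i i' j, R i j -> R i' j -> i = i') ->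
  exists pi : {perm I}, forall i j, R i j = (pi i == j).
Proof.
move=> Hex Huniq Hinj.
pose g i := odflt i [pick j | R i j].
have gP i : R i (g i).
  rewrite /g; case: pickP => [j // | H].
  by have [j Rij] := Hex i; move: (H j); rewrite Rij.
have ginj : injective g by move=> i i' e; apply: (Hinj _ _ (g i)); rewrite // e.
exists (perm ginj) => i j; rewrite permE.
by apply/idP/eqP => [/(Huniq _ _ _ (gP i)) | <-].
Qed.

Section Claim.
Variables (V W : finType) (X : {set {set V}}) (d1 : nat).
Variables (Y : {set {set W}}) (nu : W -> {set V}) (l : nat).
Hypothesis simplX : simplicial_complex X.
Hypothesis cliqueX : clique_complex X.
Hypothesis wcX : well_connected d1 X.
Hypothesis simplY : simplicial_complex Y.
Hypothesis coverY : lcover Y (faces_complex d1 X) nu l.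

Let Fl (r : {set V}) := faces_complex d1 (link X r).

Lemma Fl_simplicial (r : {set V}) : simplicial_complex (Fl r).
Proof. by apply: faces_complex_simplicial; apply: link_simplicial. Qed.

Lemma Fl_mono (r s : {set V}) : r \subset s -> {subset Fl s <= Fl r}.
Proof. by move=> rs; apply: faces_complex_mono; apply: link_mono. Qed.

(* Over every nonempty face r of dimension <= d1, Y restricts to a trivial
   cover with exactly l sheets: first over a vertex v of r, by simple
   connectivity of F(X_v), then over the connected full subcomplex F(X_r). *)
Lemma trivial_over_small_face (r : {set V}) :
  r \in X -> r != set0 -> #|r| <= d1.+1 ->
  #|components (preimage_complex Y nu (Fl r))| = l /\
  trivial_cover (preimage_complex Y nu (Fl r)) (Fl r) nu.
Proof.
move=> rX /set0Pn [v vr] rsmall.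
have vX : [set v] \in X by apply: (simplX rX); rewrite sub1set.
have fullF s : s \in X -> full_subcomplex (Fl s) (faces_complex d1 X).
  by move=> sX; apply: faces_complex_link_full.
have coverv := lcover_preimage coverY (Fl_simplicial (r := [set v])) (fullF _ vX).
have [_ splitv] := wcX.2 v vX.
have [cardv trivv] := splitv _ _ _ _ (@induced_simplicial _ _ _ simplY) coverv.
have fullr : full_subcomplex (Fl r) (Fl [set v]).
  apply: full_subcomplex_restrict (fullF r rX) _ (fullF _ vX).1.
  by apply: Fl_mono; rewrite sub1set.
rewrite -(preimage_preimage _ _ fullr.1).
have connr : connected (Fl r) := wcX.1 r rX rsmall.
have simplr := Fl_simplicial (r := r).
split; first by rewrite (card_components_preimage fullr simplr connr trivv).
exact: trivial_cover_preimage fullr simplr connr trivv.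
Qed.

End Claim.

Theorem claim5p1 (V : finType) (X : {set {set V}}) (d d1 : nat)
  (W : finType) (Y : {set {set W}}) (nu : W -> {set V}) (l : nat) :
  simplicial_complex X -> dimension X d -> clique_complex X ->
  3 * d1 + 2 <= d ->
  well_connected d1 X ->
  simplicial_complex Y ->
  lcover Y (faces_complex d1 X) nu l ->
  let Z := fun r : {set V} =>
    induced Y [set w | nu w \in vertices (faces_complex d1 (link X r))] in
  let good := fun r : {set V} => [&& r \in X, r != set0 & #|r| <= d1.+1] in
  exists Zc : {set V} -> 'I_l -> {set W},
    (forall r, good r ->
       [/\ injective (Zc r),
           [set Zc r i | i : 'I_l] = components (Z r) &
           forall i, iso_on (induced (Z r) (Zc r i)) (faces_complex d1 (link X r)) nu])
    /\
    (forall r s, good r -> good s -> r \subset s ->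
       exists pi : {perm 'I_l}, forall i j, (Zc s i \subset Zc r j) = (pi i == j)).
Proof.
move=> simplX _ cliqueX _ wcX simplY coverY Z good.
have sheets r : good r ->
    #|components (Z r)| = l /\ trivial_cover (Z r) (faces_complex d1 (link X r)) nu.
  by case/and3P => rX rn rsmall; apply: trivial_over_small_face.
pose Zc r (i : 'I_l) := nth set0 (enum (components (Z r))) i.
have Zc_comp r i : good r -> Zc r i \in components (Z r).
  by move=> /sheets [cardr _]; rewrite -(enum_nth_image set0 cardr) imset_f.
exists Zc; split => [r gr | r s gr gs rs].
  have [cardr trivr] := sheets r gr.
  split; [exact: enum_nth_inj | exact: enum_nth_image | by move=> i; apply/trivr/Zc_comp].
have [[cardr trivr] [cards trivs]] := (sheets r gr, sheets s gs).
have Zsr : {subset Z s <= Z r}.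
  by apply: preimage_mono; apply: faces_complex_mono; apply: link_mono.
have nonempty_s : vertices (faces_complex d1 (link X s)) != set0.
  by case/and3P: gs => sX _ ssmall; case: (wcX.1 s sX ssmall).
apply: perm_of_rel => [i | i j j' ij ij' | i i' j ij i'j].
- have [C' + iC'] := component_in_component Zsr (Zc_comp s i gs).
  rewrite -(enum_nth_image set0 cardr) => /imsetP [j _ eC'].
  by exists j; rewrite eC' in iC'.
- have [x xi] := components_nonempty (Zc_comp s i gs).
  apply: (enum_nth_inj (x0 := set0) cardr).
  exact: components_disj (Zc_comp r j gr) (Zc_comp r j' gr)
           (subsetP ij x xi) (subsetP ij' x xi).
- apply: (enum_nth_inj (x0 := set0) cards).
  exact: components_in_sheet_eq nonempty_s trivs trivr
           (Zc_comp s i gs) (Zc_comp s i' gs) (Zc_comp r j gr) ij i'j.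
Qed.
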